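(* Let $(A,\mathfrak m)$ be a local Prüfer ring which is not Gaussian and such that $\mathfrak m = Z(A)$, and let $I := \mathfrak m$. Then $A \bowtie I$ is a Prüfer ring and is not a Gaussian ring.
   Context: All rings are commutative with identity. For an ideal $I$ of a ring $A$, $A \bowtie I := \{(a, a+i) : a \in A, i \in I\}\subseteq A\times A$ (amalgamated duplication). $Z(A)$ is the set of zero-divisors of $A$. An ideal is regular if it contains a regular element. A ring $R$ is a Prüfer ring if every finitely generated regular ideal of $R$ is invertible. A ring $R$ is Gaussian if $c(gh)=c(g)c(h)$ for all $g,h\in R[x]$, where $c(p)$ is the ideal generated by the coefficients of $p$. *)

From HB Require Import structures.
From mathcomp Require Import all_boot all_order all_algebra.
Set Implicit Arguments.
Unset Strict Implicit.
Unset Printing Implicit Defensive.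
Import GRing.Theory.
Local Open Scope ring_scope.

Section Ideals.
Variable R : comNzRingType.

Definition is_ideal (I : {pred R}) : Prop :=
  [/\ 0 \in I,
      (forall x y, x \in I -> y \in I -> x + y \in I) &
      (forall a x, x \in I -> a * x \in I)].

Definition maximal_ideal (M : {pred R}) : Prop :=
  [/\ is_ideal M, 1 \notin M &
      forall J : {pred R}, is_ideal J -> 1 \notin J -> {subset M <= J} ->
        {subset J <= M}].

Definition local_ring (m : {pred R}) : Prop :=
  maximal_ideal m /\ forall M : {pred R}, maximal_ideal M -> M =i m.

Definition zero_divisor (x : R) : Prop := exists2 y : R, y != 0 & x * y = 0.
Definition regular (x : R) : Prop := forall y : R, x * y = 0 -> y = 0.

Definition ideal_eq (I J : R -> Prop) : Prop := forall x, I x <-> J x.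

Definition gen_ideal (s : seq R) (x : R) : Prop :=
  exists r : 'I_(size s) -> R, x = \sum_(k < size s) r k * s`_k.

Definition ideal_mul (I J : R -> Prop) (x : R) : Prop :=
  exists n (a b : 'I_n -> R),
    [/\ forall k, I (a k), forall k, J (b k) & x = \sum_(k < n) a k * b k].

Definition principal (a : R) (x : R) : Prop := exists r : R, x = a * r.

Definition finitely_generated (I : {pred R}) : Prop :=
  exists s : seq R, ideal_eq (fun x => x \in I) (gen_ideal s).

Definition regular_ideal (I : {pred R}) : Prop := exists2 a, a \in I & regular a.

Definition invertible_ideal (I : {pred R}) : Prop :=
  exists (J : {pred R}) (a : R),
    [/\ is_ideal J, regular a &
        ideal_eq (ideal_mul (fun x => x \in I) (fun x => x \in J)) (principal a)].

Definition Prufer_ring : Prop :=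
  forall I : {pred R}, is_ideal I -> finitely_generated I -> regular_ideal I ->
    invertible_ideal I.

Definition content (p : {poly R}) : R -> Prop := gen_ideal p.

Definition Gaussian_ring : Prop :=
  forall g h : {poly R},
    ideal_eq (content (g * h)) (ideal_mul (content g) (content h)).

End Ideals.

Section Duplication.
Variables (A : comNzRingType) (I : {pred A}) (hI : is_ideal I).

(* the (irrelevant) proof hI is kept as a parameter so that the ring
   structure on [dup hI] can be built *)
Definition dup_pred : {pred (A * A)%type} :=
  let _ := hI in fun p => p.2 - p.1 \in I.

Fact dup_subring_closed : subring_closed dup_pred.
Proof.
have [I0 ID IM] := hI.
have IN : forall x, x \in I -> - x \in I.
  by move=> x Ix; rewrite -mulN1r; apply: IM.
split.
- by rewrite unfold_in /= subrr.
- case=> a b; case=> c d; rewrite !unfold_in /= => Hab Hcd.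
  have -> : b - d - (a - c) = (b - a) + - (d - c).
    by rewrite !opprB addrACA [RHS]addrACA [- d + _]addrC.
  by apply: ID => //; apply: IN.
- case=> a b; case=> c d; rewrite !unfold_in /= => Hab Hcd.
  have -> : b * d - a * c = b * (d - c) + c * (b - a).
    by rewrite !mulrBr [c * b]mulrC addrA subrK [c * a]mulrC.
  by apply: ID; apply: IM.
Qed.

HB.instance Definition _ := GRing.isSubringClosed.Build (A * A)%type dup_pred
  dup_subring_closed.

(* A ⋈ I = {(a, a + i) : a ∈ A, i ∈ I} *)
Record dup : Type := Dup { dup_val :> (A * A)%type; _ : dup_val \in dup_pred }.

HB.instance Definition _ := [isSub for dup_val].
HB.instance Definition _ := [Choice of dup by <:].
HB.instance Definition _ := [SubChoice_isSubComNzRing of dup by <:].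

End Duplication.

Lemma local_ring_ideal (A : comNzRingType) (m : {pred A}) :
  local_ring m -> is_ideal m.
Proof. by case=> -[]. Qed.

(* The duplication A ⋈ m is a retract of A through the diagonal a ↦ (a, a) and
   the first projection, and Gaussianity descends along retracts: if A ⋈ m were
   Gaussian so would be A.  On the other hand every regular element (a, b) of
   A ⋈ m is a unit.  Indeed, if a ∈ m then also b ∈ m, and since m = Z(A) in a
   local ring an element of m annihilating no nonzero element of m is 0; the
   elements (y, 0) and (0, z) with y, z ∈ m then force a = b = 0.  Otherwise a
   and b are units of A and (a⁻¹, b⁻¹) ∈ A ⋈ m.  A ring whose regular elements
   are units is trivially Prüfer: a regular ideal is the whole ring. *)

From HB Require Import structures.
From mathcomp Require Import all_boot all_order all_algebra.
From mathcomp Require Import boolp classical_sets.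
Import GRing.Theory.
Local Open Scope ring_scope.
Set Implicit Arguments.
Unset Strict Implicit.

Section MaximalIdeals.
Variable A : comNzRingType.

Definition proper_ideal (I : {pred A}) : Prop := is_ideal I /\ 1 \notin I.

Lemma exists_maximal_ideal (J : {pred A}) :
  proper_ideal J -> exists2 M : {pred A}, maximal_ideal M & {subset J <= M}.
Proof.
move=> properJ.
pose T := {M : {pred A} | proper_ideal M /\ {subset J <= M}}.
pose R (s t : T) := `[< {subset sval s <= sval t} >].
pose t0 : T := exist _ J (conj properJ (fun _ => id)).
have [||| t tmax] := @ZL_preorder T t0 R.
- by move=> t; apply/asboolP.
- by move=> r s t /asboolP rs /asboolP st; apply/asboolP => z /rs /st.
- move=> C Ctot.
  have [[s0 Cs0]|] := pselect (exists s, C s); last first.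
    by move=> noC; exists t0 => s Cs; case: noC; exists s.
  pose U : {pred A} := fun z => `[< exists2 s, C s & z \in sval s >].
  have memU z : reflect (exists2 s, C s & z \in sval s) (z \in U).
    exact: asboolP.
  have properU : proper_ideal U.
    split; last by apply/memU => -[s _]; case: (svalP s) => -[_ /negP].
    split.
    + by apply/memU; exists s0 => //; case: (svalP s0) => -[[]].
    + move=> x y /memU[s Cs xs] /memU[t Ct yt]; apply/memU.
      have [/asboolP st|/asboolP ts] := Ctot _ _ Cs Ct.
      * exists t => //; case: (svalP t) => -[[_ tD _] _] _.
        by apply: tD => //; exact: st.
      * exists s => //; case: (svalP s) => -[[_ sD _] _] _.
        by apply: sD => //; exact: ts.
    + move=> a x /memU[s Cs xs]; apply/memU; exists s => //.
      by case: (svalP s) => -[[_ _ sM] _] _; apply: sM.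
  have JU : {subset J <= U}.
    by move=> z Jz; apply/memU; exists s0 => //; case: (svalP s0) => _; apply.
  by exists (exist _ U (conj properU JU)) => s Cs; apply/asboolP => z zs;
    apply/memU; exists s.
case: t tmax => M [[idealM M1] JM] /= tmax.
exists M => //; split => // N idealN N1 MN.
have /tmax /asboolP /= NM : R (exist _ M (conj (conj idealM M1) JM))
    (exist _ N (conj (conj idealN N1) (fun z Jz => MN z (JM z Jz)))).
  exact/asboolP.
exact: NM.
Qed.

Lemma local_ring_unit (m : {pred A}) (x : A) :
  local_ring m -> x \notin m -> exists y, x * y = 1.
Proof.
move=> [_ mU] xm; apply: contrapT => xNunit.
pose xA : {pred A} := fun z => `[< principal x z >].
have properxA : proper_ideal xA.
  split; last by apply/negP => /asboolP[y] /esym xy; apply: xNunit; exists y.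
  split.
  - by apply/asboolP; exists 0; rewrite mulr0.
  - by move=> u v /asboolP[r ->] /asboolP[s ->]; apply/asboolP; exists (r + s);
      rewrite mulrDr.
  - by move=> a u /asboolP[r ->]; apply/asboolP; exists (a * r); rewrite mulrCA.
have [M maxM xAM] := exists_maximal_ideal properxA.
have xM : x \in M by apply: xAM; apply/asboolP; exists 1; rewrite mulr1.
by rewrite -(mU M maxM) xM in xm.
Qed.

End MaximalIdeals.

Lemma Prufer_of_regular_unit (R : comNzRingType) :
  (forall u : R, regular u -> exists v, u * v = 1) -> Prufer_ring R.
Proof.
move=> regU I [_ _ IM] _ [u uI /regU[v uv]].
have allI x : x \in I.
  by have := IM (x * v) u uI; rewrite mulrAC -mulrA uv mulr1.
exists (fun _ => true), 1; split.
- by split.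
- by move=> y; rewrite mul1r.
- move=> x; split => [_|]; first by exists x; rewrite mul1r.
  move=> _; exists 1%N, (fun _ => x), (fun _ => 1); split => //.
  by rewrite big_ord1 mulr1.
Qed.

Section LocalZeroDivisors.
Variables (A : comNzRingType) (m : {pred A}).
Hypotheses (hloc : local_ring m) (mZ : forall x, x \in m -> zero_divisor x).

Lemma local_ann_eq0 (x : A) :
  x \in m -> (forall z, z \in m -> x * z = 0 -> z = 0) -> x = 0.
Proof.
move=> xm annx; have [y /eqP y0 xy] := mZ xm.
have [ym|ym] := boolP (y \in m); first by case: y0; apply: annx.
have [y' yy'] := local_ring_unit hloc ym.
by rewrite -[x]mulr1 -yy' mulrA xy mul0r.
Qed.

End LocalZeroDivisors.

Lemma gen_ideal_nat (R : comNzRingType) (s : seq R) x :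
  gen_ideal s x <-> exists r : nat -> R, x = \sum_(k < size s) r k * s`_k.
Proof.
split=> -[r ->]; last by exists (fun k => r k).
exists (fun n => if insub n is Some k then r k else 0).
apply: eq_bigr => k _; case: insubP => [k' _ /val_inj -> //|].
by rewrite ltn_ord.
Qed.

Lemma ideal_mul_morph (R S : comNzRingType) (h : {rmorphism R -> S})
    (I J : R -> Prop) (I' J' : S -> Prop) x :
  (forall y, I y -> I' (h y)) -> (forall y, J y -> J' (h y)) ->
  ideal_mul I J x -> ideal_mul I' J' (h x).
Proof.
move=> II' JJ' [n [a [b [Ia Jb ->]]]].
exists n, (h \o a), (h \o b); split=> [k|k|]; [exact: II' | exact: JJ' |].
by rewrite rmorph_sum; apply: eq_bigr => k _; rewrite rmorphM.
Qed.

Section GaussianRetract.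
Variables (A B : comNzRingType) (f : {rmorphism A -> B}) (g : {rmorphism B -> A}).
Hypothesis fK : cancel f g.

Lemma size_map_retract (p : {poly A}) : size (map_poly f p) = size p.
Proof. by apply: size_map_inj_poly; [exact: can_inj fK | rewrite rmorph0]. Qed.

Lemma content_map (p : {poly A}) x :
  content p x -> content (map_poly f p) (f x).
Proof.
move=> /gen_ideal_nat[r ->]; apply/gen_ideal_nat; exists (f \o r).
rewrite size_map_retract rmorph_sum; apply: eq_bigr => k _.
by rewrite rmorphM coef_map.
Qed.

Lemma content_map_retract (p : {poly A}) y :
  content (map_poly f p) y -> content p (g y).
Proof.
move=> /gen_ideal_nat[r ->]; apply/gen_ideal_nat; exists (g \o r).
rewrite size_map_retract rmorph_sum; apply: eq_bigr => k _.
by rewrite rmorphM coef_map /= fK.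
Qed.

Lemma Gaussian_retract : Gaussian_ring B -> Gaussian_ring A.
Proof.
move=> gaussB p q x; split.
- move=> /content_map; rewrite rmorphM => /gaussB.
  rewrite -{2}[x]fK.
  by apply: (ideal_mul_morph (h := g)) => y; exact: content_map_retract.
- move=> /(ideal_mul_morph (@content_map p) (@content_map q)) /gaussB.
  by rewrite -rmorphM => /content_map_retract; rewrite fK.
Qed.

End GaussianRetract.

Section Duplication.
Variables (A : comNzRingType) (I : {pred A}) (hI : is_ideal I).
Local Notation D := (dup hI).

Lemma dup_predE (p : A * A) : (p \in dup_pred hI) = (p.2 - p.1 \in I).
Proof. by []. Qed.

Lemma dup_val_mul (u v : D) :
  val (u * v) = ((val u).1 * (val v).1, (val u).2 * (val v).2).
Proof. by []. Qed.

Lemma dup_diag_subproof (a : A) : (a, a) \in dup_pred hI.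
Proof. by rewrite dup_predE subrr; case: hI. Qed.

Definition dup_diag (a : A) : D := Dup (dup_diag_subproof a).
Definition dup_fst (u : D) : A := (val u).1.

Lemma dup_diag_zmod_morphism : zmod_morphism dup_diag.
Proof. by move=> a b; apply: val_inj. Qed.
HB.instance Definition _ :=
  GRing.isZmodMorphism.Build A D dup_diag dup_diag_zmod_morphism.

Lemma dup_diag_monoid_morphism : monoid_morphism dup_diag.
Proof. by split=> [|a b]; apply: val_inj. Qed.
HB.instance Definition _ :=
  GRing.isMonoidMorphism.Build A D dup_diag dup_diag_monoid_morphism.

Lemma dup_fst_zmod_morphism : zmod_morphism dup_fst. Proof. by []. Qed.
HB.instance Definition _ :=
  GRing.isZmodMorphism.Build D A dup_fst dup_fst_zmod_morphism.

Lemma dup_fst_monoid_morphism : monoid_morphism dup_fst. Proof. by []. Qed.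
HB.instance Definition _ :=
  GRing.isMonoidMorphism.Build D A dup_fst dup_fst_monoid_morphism.

Lemma dup_diagK : cancel dup_diag dup_fst. Proof. by []. Qed.

Lemma dup_regular_annl (u : D) y :
  regular u -> y \in I -> (val u).1 * y = 0 -> y = 0.
Proof.
move=> ureg Iy uy; have [_ _ IM] := hI.
have y0mem : (y, 0) \in dup_pred hI by rewrite dup_predE sub0r -mulN1r IM.
have /(congr1 (fun w : D => (val w).1)) // : Dup y0mem = 0.
by apply: ureg; apply: val_inj; rewrite dup_val_mul /= uy mulr0.
Qed.

Lemma dup_regular_annr (u : D) z :
  regular u -> z \in I -> (val u).2 * z = 0 -> z = 0.
Proof.
move=> ureg Iz uz.
have zmem : (0, z) \in dup_pred hI by rewrite dup_predE subr0.
have /(congr1 (fun w : D => (val w).2)) // : Dup zmem = 0.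
by apply: ureg; apply: val_inj; rewrite dup_val_mul /= uz mulr0.
Qed.

Lemma dup_inv_subproof (a b a' b' : A) :
  a * a' = 1 -> b * b' = 1 -> (a, b) \in dup_pred hI -> (a', b') \in dup_pred hI.
Proof.
move=> aa' bb'; have [_ _ IM] := hI; rewrite !dup_predE /= => /(IM (- (a' * b'))).
have -> // : - (a' * b') * (b - a) = b' - a'.
rewrite mulNr -mulrN opprB mulrBr mulrAC (mulrC a' a) aa' mul1r.
by rewrite -mulrA (mulrC b') bb' mulr1.
Qed.

End Duplication.

Section DuplicationLocal.
Variables (A : comNzRingType) (m : {pred A}) (hloc : local_ring m).
Hypothesis mZ : forall x, x \in m -> zero_divisor x.
Let hm := local_ring_ideal hloc.

Lemma dup_regular_unit (u : dup hm) : regular u -> exists v, u * v = 1.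
Proof.
case: u => -[a b] abm ureg; have [_ mD mM] := hm.
have mN x : x \in m -> - x \in m by move=> xm; rewrite -mulN1r mM.
have ab_m : (a \in m) = (b \in m).
  have abI : b - a \in m := abm.
  apply/idP/idP => [am | bm].
  - by rewrite -(subrK a b) mD.
  - by rewrite -(subrK b a) -opprB mD ?mN.
have [am|am] := boolP (a \in m).
  have bm : b \in m by rewrite -ab_m.
  have a0 : a = 0.
    by apply: (local_ann_eq0 hloc mZ am) => y; exact: dup_regular_annl ureg.
  have b0 : b = 0.
    by apply: (local_ann_eq0 hloc mZ bm) => z; exact: dup_regular_annr ureg.
  have /eqP : 1 = 0 :> dup hm.
    by apply: ureg; apply: val_inj => /=; rewrite a0 b0 !mul0r.
  by rewrite oner_eq0.
have bm : b \notin m by rewrite -ab_m.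
have [a' aa'] := local_ring_unit hloc am.
have [b' bb'] := local_ring_unit hloc bm.
exists (Dup (dup_inv_subproof aa' bb' abm)).
by apply: val_inj; rewrite dup_val_mul /= aa' bb'.
Qed.

End DuplicationLocal.

Theorem mainTheorem9 (A : comNzRingType) (m : {pred A})
  (hloc : local_ring m)
  (hPruf : Prufer_ring A)
  (hnG : ~ Gaussian_ring A)
  (hZ : forall x : A, x \in m <-> zero_divisor x) :
  Prufer_ring (@dup A m (local_ring_ideal hloc)) /\
  ~ Gaussian_ring (@dup A m (local_ring_ideal hloc)).
Proof.
split.
- apply: Prufer_of_regular_unit; apply: dup_regular_unit => x.
  by move/hZ.
- by move/(Gaussian_retract (@dup_diagK _ _ (local_ring_ideal hloc))).
Qed.
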